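(* Let $m>0$. There is a constant $C_2>0$ such that for every $\varepsilon\in(0,1]$ and every $\bar x\in\mathbb{R}^4$, $$|\overline{\mathcal{G}}_\varepsilon(\bar x)-\widetilde{\mathcal{G}}_\varepsilon(\bar x)|\le C_2.$$
   Context: For $\varepsilon\in(0,1]$ and $(x,z)\in\mathbb{R}^2\times\mathbb{R}^2$, with $k=(k_1,k_2)$: $$\overline{\mathcal{G}}_\varepsilon(x,z)=\frac1{(2\pi)^4}\int_{\mathbb{R}^4}\frac{\sin^2(\varepsilon k_1/2)\sin^2(\varepsilon k_2/2)}{\varepsilon^4k_1^2k_2^2}\cdot\frac{e^{-i(x\cdot y+k\cdot z)}}{\big(|y|^2+4\varepsilon^{-2}\sin^2(\varepsilon k_1/2)+4\varepsilon^{-2}\sin^2(\varepsilon k_2/2)+m^2\big)^2}\,\mathrm{d}y\,\mathrm{d}k,$$ $$\widetilde{\mathcal{G}}_\varepsilon(x,z)=\frac1{(2\pi)^4}\int_{\mathbb{R}^4}\frac{\sin^2(\varepsilon k_1/2)\sin^2(\varepsilon k_2/2)}{\varepsilon^4k_1^2k_2^2}\cdot\frac{e^{-i(x\cdot y+k\cdot z)}}{(|y|^2+|k|^2+m^2)^2}\,\mathrm{d}y\,\mathrm{d}k.$$ *)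

From HB Require Import structures.
From mathcomp Require Import all_boot all_order all_algebra.
From mathcomp Require Import all_classical all_reals all_analysis.
Import Order.TTheory GRing.Theory Num.Theory.
Import numFieldNormedType.Exports.
Local Open Scope classical_set_scope.
Local Open Scope ring_scope.

(* Lebesgue measure on R^2 and R^4 = R^2 x R^2 (product measures).
   The library's canonical sigma-finite instance for [\x] is shadowed, so
   we register it for [leb2] explicitly. *)
Section Leb.
Local Open Scope ereal_scope.
Definition leb2 (R : realType) := (@lebesgue_measure R \x @lebesgue_measure R).

HB.instance Definition _ (R : realType) := Measure.on (leb2 R).

Lemma leb2_sigma_finite (R : realType) : sigma_finite setT (leb2 R).
Proof.
rewrite /leb2.
have /sigma_finiteP[F [TF ndF Foo]] := sigma_finiteT (@lebesgue_measure R).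
exists (fun n => F n `*` F n).
  rewrite -setXTT TF predeqE => -[x y]; split.
    move=> [/= [n _ Fnx] [k _ Gky]]; exists (maxn n k) => //; split.
    - by move: x Fnx; exact/subsetPset/ndF/leq_maxl.
    - by move: y Gky; exact/subsetPset/ndF/leq_maxr.
  by move=> [n _ []/= ? ?]; split; exists n.
move=> k; have [? ?] := Foo k.
split; first exact: measurableX.
by rewrite product_measure1E// lte_mul_pinfty// ge0_fin_numE.
Qed.

HB.instance Definition _ (R : realType) :=
  Measure_isSigmaFinite.Build _ _ _ (leb2 R) (@leb2_sigma_finite R).

Definition leb4 (R : realType) := (leb2 R \x leb2 R).
HB.instance Definition _ (R : realType) := Measure.on (leb4 R).
End Leb.

Set Implicit Arguments. Unset Strict Implicit. Unset Printing Implicit Defensive.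

(* Points of R^4 = R^2 x R^2 are written ((y1, y2), (k1, k2)). *)
Section G.
Variable R : realType.

Definition dot2 (a b : R * R) : R := a.1 * b.1 + a.2 * b.2.
Definition nrm2 (a : R * R) : R := a.1 ^+ 2 + a.2 ^+ 2.

Definition kfac (eps : R) (k : R * R) : R :=
  (sin (eps * k.1 / 2)) ^+ 2 * (sin (eps * k.2 / 2)) ^+ 2 /
  (eps ^+ 4 * k.1 ^+ 2 * k.2 ^+ 2).

Definition Dbar (m eps : R) (y k : R * R) : R :=
  nrm2 y + 4 * eps ^- 2 * (sin (eps * k.1 / 2)) ^+ 2
         + 4 * eps ^- 2 * (sin (eps * k.2 / 2)) ^+ 2 + m ^+ 2.

Definition Dtil (m : R) (y k : R * R) : R := nrm2 y + nrm2 k + m ^+ 2.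

(* Complex-valued integral (2pi)^-4 \int kfac * e^{-i(x.y + k.z)} / D^2,
   returned as (real part, imaginary part); e^{-i t} = cos t - i sin t. *)
Definition Gint (eps : R) (D : R * R -> R * R -> R) (x z : R * R) : R * R :=
  let c := ((2 * pi) ^+ 4)^-1 in
  (c * Rintegral (leb4 R) setT (fun p => kfac eps p.2 *
        cos (dot2 x p.1 + dot2 p.2 z) / (D p.1 p.2) ^+ 2),
   c * Rintegral (leb4 R) setT (fun p => - (kfac eps p.2 *
        sin (dot2 x p.1 + dot2 p.2 z) / (D p.1 p.2) ^+ 2))).

Definition Gbar (m eps : R) (x z : R * R) : R * R := Gint eps (Dbar m eps) x z.
Definition Gtil (m eps : R) (x z : R * R) : R * R := Gint eps (Dtil m) x z.

Definition cmod (w : R * R) : R := Num.sqrt (w.1 ^+ 2 + w.2 ^+ 2).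

End G.

From HB Require Import structures.
From mathcomp Require Import all_boot all_order all_algebra.
From mathcomp Require Import all_classical all_reals all_analysis.
From mathcomp Require Import measurable_realfun ring lra.
Import Order.TTheory GRing.Theory Num.Theory.
Import numFieldNormedType.Exports.
Local Open Scope classical_set_scope.
Local Open Scope ring_scope.

(* Write B = |y|^2 + b(k) and T = |y|^2 + |k|^2 + m^2 for the two denominators, where
   b(k) = 4 eps^-2 (sin^2(eps k1/2) + sin^2(eps k2/2)) + m^2 <= |k|^2 + m^2.  Both
   integrands are dominated by kfac(k) / (|y|^2 + m^2)^2, and sin^2 u <= min(1, u^2)
   bounds kfac by a product of Lorentzians 1 / (1 + eps^2 k_i^2), so both integrals
   converge absolutely.  Pointwise 1/B^2 - 1/T^2 <= 2 (T - B) / ((|k|^2 + m^2) B^2), and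
   integrating over y costs at most pi^2 / (2 b(k)).  Since u^2 - sin^2 u <= u^4 / 3,
   T - B = O(eps^2 k_i^4), and what remains of the k-integrand is at most
   (5/4) pi^2 eps^2 times the two Lorentzians, whose integral pi^2 / eps^2 cancels the
   eps^2.  Hence the difference is at most 2 (2 pi)^-4 (5/4) pi^4 = 5/32 for every
   eps > 0. *)

Section Trigonometric_bounds.
Context {R : realType}.
Implicit Types x : R.

Lemma is_derive_ge0_le (f df : R -> R) x :
  (forall y : R, is_derive y (1 : R) f (df y)) -> (forall y, 0 <= y -> 0 <= df y) ->
  0 <= x -> f 0 <= f x.
Proof.
move=> fd df_ge0; rewrite le_eqVlt => /predU1P[<-//|x_gt0]; rewrite -subr_ge0.
have [|y /[!in_itv] /= /andP[y_gt0 _] ->] := MVT x_gt0 (fun y _ => fd y).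
  by apply: derivable_within_continuous => y _; case: (fd y).
by rewrite mulr_ge0 ?df_ge0 ?subr0 ?ltW.
Qed.

Lemma sin_le_id x : 0 <= x -> sin x <= x.
Proof.
move=> x_ge0; have := @is_derive_ge0_le (fun x => x - sin x) (fun y => 1 - cos y) x.
by rewrite sin0 subr0 subr_ge0; apply=> [y _|//]; rewrite subr_ge0 cos_le1.
Qed.

Lemma sin_ge_Nid x : 0 <= x -> - x <= sin x.
Proof.
move=> x_ge0; have := @is_derive_ge0_le (fun x => x + sin x) (fun y => 1 + cos y) x.
by rewrite sin0 addr0 -lerBlDl sub0r; apply=> [y _|//]; rewrite -lerBlDl sub0r cos_geN1.
Qed.

Lemma sin_sqr_le x : sin x ^+ 2 <= x ^+ 2.
Proof.
wlog x_ge0 : x / 0 <= x => [wlog_x|].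
  by have [/wlog_x//|/ltW] := leP 0 x; rewrite -oppr_ge0 => /wlog_x; rewrite sinN !sqrrN.
have := sin_le_id x x_ge0; have := sin_ge_Nid x x_ge0; nra.
Qed.

Lemma cos_ge_quadratic x : 1 - x ^+ 2 / 2 <= cos x.
Proof.
have -> : cos x = 1 - 2 * sin (x / 2) ^+ 2.
  by rewrite {1}(splitr x) cosD -!expr2 cos2sin2; ring.
by have := sin_sqr_le (x / 2); lra.
Qed.

Lemma sin_ge_cubic x : 0 <= x -> x - x ^+ 3 / 6 <= sin x.
Proof.
move=> x_ge0; rewrite -subr_ge0.
have := @is_derive_ge0_le (fun x => sin x - (x - x ^+ 3 / 6))
  (fun y => cos y - (1 - y ^+ 2 / 2)) x.
rewrite sin0 expr0n /= mul0r !subr0; apply=> [y|y _|//]; last by rewrite subr_ge0 cos_ge_quadratic.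
by apply: is_derive_eq; rewrite !scaler0 add0r /GRing.scale /= !mulr1 expr2; congr (_ - (_ - _)); field.
Qed.

Lemma sqr_sub_sin_sqr_le x : x ^+ 2 - sin x ^+ 2 <= x ^+ 4 / 3.
Proof.
wlog x_ge0 : x / 0 <= x => [wlog_x|].
  have [/wlog_x//|/ltW] := leP 0 x; rewrite -oppr_ge0 => /wlog_x.
  by rewrite sinN !sqrrN -[4%N]/(2 * 2)%N !exprM sqrrN.
have := sin_le_id x x_ge0; have := sin_ge_Nid x x_ge0; have := sin_ge_cubic x x_ge0.
have -> : x ^+ 4 / 3 = (x ^+ 3 / 6) * (2 * x) by field.
have -> : x ^+ 2 - sin x ^+ 2 = (x - sin x) * (x + sin x) by ring.
by move=> h1 h2 h3; apply: ler_pM; lra.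
Qed.

End Trigonometric_bounds.

Section Lorentzian.
Context {R : realType}.
Notation mu := (@lebesgue_measure R).

Definition lorentz (c x : R) : R := (1 + (c * x) ^+ 2)^-1.

Lemma lorentz_ge0 c x : 0 <= lorentz c x.
Proof. by rewrite invr_ge0 addr_ge0 ?sqr_ge0. Qed.

Lemma continuous_lorentz c : continuous (lorentz c).
Proof.
move=> x; apply: (@continuous_comp _ _ _ ( *%R c) (fun y => (oneDsqr y)^-1)).
  by apply: continuousM => //; exact: cvg_cst.
exact: continuous_oneDsqrV.
Qed.

Lemma measurable_lorentz c : measurable_fun setT (lorentz c).
Proof. exact: continuous_measurable_fun (continuous_lorentz c). Qed.

Lemma integral_lorentz c : 0 < c -> (\int[mu]_x (lorentz c x)%:E = (pi / c)%:E)%E.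
Proof.
move=> c_gt0; pose F x := c^-1 * atan (c * x).
have dF (x : R) : is_derive x (1 : R) F (lorentz c x).
  have cx' : is_derive x (1 : R) ( *%R c) c.
    by apply: is_derive_eq; rewrite /GRing.scale /= mulr1.
  apply: is_derive_eq (is_deriveZ c^-1 (is_derive1_comp (is_derive1_atan _) cx')) _.
  by rewrite /GRing.scale /= mulrCA mulVf ?gt_eqF // mulr1.
have lorentzN : lorentz c =1 lorentz c \o -%R.
  by move=> x; rewrite /lorentz /= mulrN sqrrN.
rewrite (ge0_symfun_integralT (@lorentz_ge0 c) (@continuous_lorentz c) lorentzN).
rewrite -set_itvcy (@ge0_continuous_FTC2y _ (lorentz c) F 0 (c^-1 * (pi / 2))).
- rewrite /F mulr0 atan0 mulr0 sube0 -EFinM; congr EFin; field; exact: lt0r_neq0.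
- by move=> x _; exact: lorentz_ge0.
- exact/continuous_subspaceT/continuous_lorentz.
- apply: cvgM; first exact: cvg_cst.
  apply: (@cvg_comp _ _ _ ( *%R c) atan _ (pinfty_nbhs R)); last exact: cvgy_atan.
  exact: gt0_cvgMry c_gt0 cvg_id.
- by move=> x _; case: (dF x).
- apply: cvg_at_right_filter; apply: differentiable_continuous.
  by apply/derivable1_diffP; case: (dF 0).
- by move=> x _; rewrite derive1E; exact: derive_val.
Qed.

Lemma integral_lorentz_lty c : 0 < c -> (\int[mu]_t (lorentz c t)%:E < +oo)%E.
Proof. by move=> c_gt0; rewrite integral_lorentz // ltry. Qed.

Lemma integral_inv_sqr_add a : 0 < a ->
  (\int[mu]_t ((t ^+ 2 + a)^-1)%:E = (pi / Num.sqrt a)%:E)%E.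
Proof.
move=> a_gt0; have sa_gt0 : 0 < Num.sqrt a by rewrite sqrtr_gt0.
have E t : (t ^+ 2 + a)^-1 = a^-1 * lorentz (Num.sqrt a)^-1 t.
  have at_gt0 : 0 < a + t ^+ 2 by rewrite ltr_pwDl ?sqr_ge0.
  by rewrite /lorentz exprMn exprVn sqr_sqrtr ?ltW //; field; rewrite !gt_eqF.
under eq_integral do rewrite E EFinM.
rewrite ge0_integralZl_EFin ?invr_ge0 ?ltW //; last 2 first.
- by move=> t _; rewrite lee_fin lorentz_ge0.
- by apply/measurable_EFinP; exact: measurable_lorentz.
rewrite integral_lorentz ?invr_gt0 // -EFinM invrK; congr EFin.
by rewrite -{1}(sqr_sqrtr (ltW a_gt0)); field; rewrite gt_eqF.
Qed.

End Lorentzian.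

Section Measurable_functions.
Context {R : realType}.

Lemma measurable_inv : measurable_fun [set: R] GRing.inv.
Proof.
have -> : [set: R] = ~` [set 0] `|` [set 0] by rewrite setvU.
apply/measurable_funU; [exact/measurableC | exact: measurable_set1 |].
split; last exact: measurable_fun_set1.
apply: open_continuous_measurable_fun.
  exact/closed_openC/(accessible_closed_set1 (hausdorff_accessible (@Rhausdorff R))).
by move=> x; rewrite inE => /eqP x_neq0; exact: inv_continuous.
Qed.

Lemma measurable_sin : measurable_fun [set: R] sin.
Proof. exact: continuous_measurable_fun (@continuous_sin R). Qed.

Lemma measurable_cos : measurable_fun [set: R] cos.
Proof. exact: continuous_measurable_fun (@continuous_cos R). Qed.

End Measurable_functions.

Ltac measurable_fun_tac := repeat first
  [ exact: measurable_cst | exact: measurable_id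
  | exact: measurable_fst | exact: measurable_snd
  | apply: measurable_funD | apply: measurable_funM | apply: measurable_funN
  | apply: measurable_funX
  | apply: (measurableT_comp measurable_inv)
  | apply: (measurableT_comp measurable_sin)
  | apply: (measurableT_comp measurable_cos)
  | apply: (measurableT_comp measurable_fst)
  | apply: (measurableT_comp measurable_snd) ].

Lemma ge0_integrable d (T : measurableType d) (R : realType)
    (mu : {measure set T -> \bar R}) (f : T -> R) :
  measurable_fun setT f -> (forall x, 0 <= f x) -> (\int[mu]_x (f x)%:E < +oo)%E ->
  mu.-integrable setT (EFin \o f).
Proof.
move=> mf f_ge0 f_fin; apply/integrableP; split; first exact/measurable_EFinP.
by rewrite (_ : (fun x => _) = EFin \o f) //; apply/funext => x; rewrite /= ger0_norm.
Qed.

Lemma le_integrable_EFin d (T : measurableType d) (R : realType)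
    (mu : {measure set T -> \bar R}) (f g : T -> R) :
  measurable_fun setT f -> (forall x, `|f x| <= g x) ->
  mu.-integrable setT (EFin \o g) -> mu.-integrable setT (EFin \o f).
Proof.
move=> mf fg; apply: le_integrable => //; first exact/measurable_EFinP.
by move=> x _; rewrite !abse_EFin lee_fin (le_trans (fg x)) // ler_norm.
Qed.

Section Product_integral.
Context d1 d2 (T1 : measurableType d1) (T2 : measurableType d2) (R : realType).
Variables (m1 : {sigma_finite_measure set T1 -> \bar R})
          (m2 : {sigma_finite_measure set T2 -> \bar R}).
Variables (f : T1 -> R) (g : T2 -> R).
Hypotheses (mf : measurable_fun setT f) (mg : measurable_fun setT g).

Lemma measurable_prod_mul : measurable_fun setT (fun z : T1 * T2 => f z.1 * g z.2).
Proof.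
apply: measurable_funM; first exact: measurableT_comp mf measurable_fst.
exact: measurableT_comp mg measurable_snd.
Qed.

Hypotheses (f_ge0 : forall x, 0 <= f x) (g_ge0 : forall y, 0 <= g y).

Lemma integral_prod_mul :
  (\int[m1 \x m2]_z (f z.1 * g z.2)%:E =
   \int[m1]_x (f x)%:E * \int[m2]_y (g y)%:E)%E.
Proof.
have mf' : measurable_fun setT (EFin \o f) by exact/measurable_EFinP.
have mg' : measurable_fun setT (EFin \o g) by exact/measurable_EFinP.
rewrite fubini_tonelli1 //=; last 2 first.
- by apply/measurable_EFinP; exact: measurable_prod_mul.
- by move=> z; rewrite lee_fin mulr_ge0.
rewrite /fubini_F /= -ge0_integralZr //; last 2 first.
- by move=> x _; rewrite lee_fin.
- by apply: integral_ge0 => y _; rewrite lee_fin.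
apply: eq_integral => x _; under eq_integral do rewrite EFinM.
by rewrite ge0_integralZl_EFin // => y _; rewrite lee_fin.
Qed.

Lemma integral_prod_mul_lty :
  (\int[m1]_x (f x)%:E < +oo)%E -> (\int[m2]_y (g y)%:E < +oo)%E ->
  (\int[m1 \x m2]_z (f z.1 * g z.2)%:E < +oo)%E.
Proof.
move=> f_fin g_fin; rewrite integral_prod_mul lte_mul_pinfty ?integral_ge0 ?ge0_fin_numE //.
  by move=> x _; rewrite lee_fin.
by apply: integral_ge0 => x _; rewrite lee_fin.
Qed.

End Product_integral.

Section Real_inequalities.
Context {R : realFieldType}.

Lemma inv_sqr_add_le (U V : R) : 0 < U -> 0 < V ->
  ((U + V) ^+ 2)^-1 <= (2 * U)^-1 * (2 * V)^-1.
Proof.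
move=> U_gt0 V_gt0; rewrite -invfM lef_pV2 ?posrE ?exprn_gt0 ?mulr_gt0 ?addr_gt0 //.
by have := sqr_ge0 (U - V); lra.
Qed.

Lemma norm_mul_inv_sqr_le (K c A B : R) : 0 <= K -> `|c| <= 1 -> 0 < A -> A <= B ->
  `|K * c / B ^+ 2| <= K / A ^+ 2.
Proof.
move=> K_ge0 c_le1 A_gt0 AB; have B_gt0 := lt_le_trans A_gt0 AB.
rewrite -mulrA normrM (ger0_norm K_ge0) ler_wpM2l // normrM normfV (ger0_norm (sqr_ge0 B)).
rewrite -[leRHS]mul1r ler_pM ?normr_ge0 ?invr_ge0 ?sqr_ge0 //.
by rewrite lef_pV2 ?posrE ?exprn_gt0 //; nra.
Qed.

Lemma inv_sqr_sub_inv_sqr_le (B T c : R) : 0 < B -> B <= T -> 0 < c -> c <= T ->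
  (B ^+ 2)^-1 - (T ^+ 2)^-1 <= 2 * (T - B) / (c * B ^+ 2).
Proof.
move=> B_gt0 BT c_gt0 cT; have T_gt0 := lt_le_trans B_gt0 BT.
have -> : (B ^+ 2)^-1 - (T ^+ 2)^-1 = (T - B) * (2 / T - (T - B) / T ^+ 2) / B ^+ 2.
  by field; rewrite !gt_eqF.
have -> : 2 * (T - B) / (c * B ^+ 2) = (T - B) * (2 / c) / B ^+ 2.
  by field; rewrite !gt_eqF.
rewrite ler_wpM2r ?invr_ge0 ?sqr_ge0 // ler_wpM2l ?subr_ge0 //.
have : 2 / T <= 2 / c by rewrite ler_wpM2l // lef_pV2.
have : 0 <= (T - B) / T ^+ 2 by rewrite divr_ge0 ?sqr_ge0 ?subr_ge0.
lra.
Qed.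

End Real_inequalities.

Section Symbols.
Context {R : realType}.
Implicit Types (e m t : R) (y k : R * R).

Definition kfac1 e t := sin (e * t / 2) ^+ 2 / (e * t) ^+ 2.

Definition dlap e t := 4 * e ^- 2 * sin (e * t / 2) ^+ 2.
Definition symbar m e k := dlap e k.1 + dlap e k.2 + m ^+ 2.
Definition symtil m k := nrm2 k + m ^+ 2.

Lemma kfacE e k : kfac e k = kfac1 e k.1 * kfac1 e k.2.
Proof. by rewrite /kfac /kfac1 mulf_div; congr (_ / _); ring. Qed.

Lemma DbarE m e y k : Dbar m e y k = nrm2 y + symbar m e k.
Proof. by rewrite /Dbar /symbar /dlap; ring. Qed.

Lemma DtilE m y k : Dtil m y k = nrm2 y + symtil m k.
Proof. by rewrite /Dtil /symtil; ring. Qed.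

Lemma nrm2_ge0 y : 0 <= nrm2 y.
Proof. by rewrite addr_ge0 ?sqr_ge0. Qed.

Lemma kfac1_ge0 e t : 0 <= kfac1 e t.
Proof. by rewrite divr_ge0 ?sqr_ge0. Qed.

Lemma kfac_ge0 e k : 0 <= kfac e k.
Proof. by rewrite kfacE mulr_ge0 ?kfac1_ge0. Qed.

Lemma dlap_ge0 e t : 0 <= dlap e t.
Proof. by rewrite /dlap mulr_ge0 ?sqr_ge0 // mulr_ge0 // invr_ge0 sqr_ge0. Qed.

Lemma dlap_le_sqr e t : e != 0 -> dlap e t <= t ^+ 2.
Proof.
move=> e_neq0; have -> : t ^+ 2 = 4 * e ^- 2 * (e * t / 2) ^+ 2 by field.
by rewrite /dlap ler_wpM2l ?sin_sqr_le // mulr_ge0 // invr_ge0 sqr_ge0.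
Qed.

Lemma sqr_sub_dlap_le e t : e != 0 -> t ^+ 2 - dlap e t <= e ^+ 2 * t ^+ 4 / 12.
Proof.
move=> e_neq0.
have -> : t ^+ 2 - dlap e t = 4 * e ^- 2 * ((e * t / 2) ^+ 2 - sin (e * t / 2) ^+ 2).
  by rewrite /dlap; field.
have -> : e ^+ 2 * t ^+ 4 / 12 = 4 * e ^- 2 * ((e * t / 2) ^+ 4 / 3) by field.
by rewrite ler_wpM2l ?sqr_sub_sin_sqr_le // mulr_ge0 // invr_ge0 sqr_ge0.
Qed.

Lemma symbar_le_symtil m e k : e != 0 -> symbar m e k <= symtil m k.
Proof. by move=> e_neq0; rewrite /symbar /symtil lerD2r lerD ?dlap_le_sqr. Qed.

Lemma kfac1_le_lorentz e t : kfac1 e t <= 5 / 4 * lorentz e t.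
Proof.
rewrite /kfac1 /lorentz; set u := e * t.
have [->|u_neq0] := eqVneq u 0.
  by rewrite expr0n /= invr0 mulr0 mulr_ge0 // invr_ge0 addr_ge0 ?sqr_ge0.
have u2_gt0 : 0 < u ^+ 2 by rewrite exprn_even_gt0 ?u_neq0 ?orbT.
have Du_gt0 : 0 < 1 + u ^+ 2 by rewrite ltr_pwDl ?sqr_ge0.
have -> : 5 / 4 * (1 + u ^+ 2)^-1 = (5 / 4 * u ^+ 2) / (1 + u ^+ 2) / u ^+ 2.
  by field; rewrite u_neq0 gt_eqF.
apply: ler_wpM2r; first by rewrite invr_ge0 ltW.
rewrite ler_pdivlMr //.
have := sin_sqr_le (u / 2); have : sin (u / 2) ^+ 2 <= 1 by rewrite sin2cos2 lerBlDr lerDl sqr_ge0.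
by rewrite expr_div_n; nra.
Qed.

Lemma kfac1_sqr_sub_dlap_le e t : e != 0 ->
  kfac1 e t * (t ^+ 2 - dlap e t) <= e ^+ 2 / 2 * (t ^+ 2 * dlap e t) * lorentz e t.
Proof.
move=> e_neq0.
have [->|t_neq0] := eqVneq t 0.
  by rewrite /kfac1 mulr0 expr0n /= invr0 !(mulr0, mul0r).
have et_neq0 : e * t != 0 by rewrite mulf_neq0.
have gap_le : (t ^+ 2 - dlap e t) * (1 + (e * t) ^+ 2) <= 2 * e ^+ 2 * t ^+ 4.
  have gap_le_sqr : t ^+ 2 - dlap e t <= t ^+ 2 by rewrite lerBlDr lerDl dlap_ge0.
  have := ler_wpM2r (sqr_ge0 (e * t)) gap_le_sqr; have := sqr_sub_dlap_le e t e_neq0.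
  have -> : t ^+ 2 * (e * t) ^+ 2 = e ^+ 2 * t ^+ 4 by ring.
  have : 0 <= e ^+ 2 * t ^+ 4 by rewrite mulr_ge0 ?exprn_even_ge0.
  rewrite mulrDr mulr1 -mulrA; lra.
have -> : e ^+ 2 / 2 * (t ^+ 2 * dlap e t) * lorentz e t =
          kfac1 e t * (2 * e ^+ 2 * t ^+ 4 * lorentz e t).
  by rewrite /kfac1 /dlap; field; rewrite t_neq0 e_neq0.
apply: ler_wpM2l; first exact: kfac1_ge0.
by rewrite /lorentz ler_pdivlMr // ltr_pwDl ?sqr_ge0.
Qed.

Lemma kfac_gap_le m e k : e != 0 ->
  kfac e k * (symtil m k - symbar m e k) <=
  5 / 4 * e ^+ 2 * (lorentz e k.1 * lorentz e k.2) * (symtil m k * symbar m e k).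
Proof.
move=> e_neq0; set T := symtil m k; set B := symbar m e k.
have [T_ge0 B_ge0] : 0 <= T /\ 0 <= B.
  by split; rewrite !addr_ge0 ?nrm2_ge0 ?sqr_ge0 ?dlap_ge0.
have term_le t u : t ^+ 2 <= T -> dlap e t <= B ->
    kfac1 e u * (kfac1 e t * (t ^+ 2 - dlap e t)) <=
    5 / 4 * lorentz e u * (e ^+ 2 / 2 * (T * B) * lorentz e t).
  move=> tT dB; apply: ler_pM; rewrite ?kfac1_ge0 ?kfac1_le_lorentz //.
    by rewrite mulr_ge0 ?kfac1_ge0 // subr_ge0 dlap_le_sqr.
  apply: le_trans (kfac1_sqr_sub_dlap_le e t e_neq0) _.
  rewrite ler_wpM2r ?lorentz_ge0 // ler_wpM2l ?divr_ge0 ?sqr_ge0 //.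
  by rewrite ler_pM ?sqr_ge0 ?dlap_ge0.
have [t1T t2T] : k.1 ^+ 2 <= T /\ k.2 ^+ 2 <= T.
  rewrite /T /symtil /nrm2.
  by have := sqr_ge0 k.1; have := sqr_ge0 k.2; have := sqr_ge0 m; split; lra.
have [d1B d2B] : dlap e k.1 <= B /\ dlap e k.2 <= B.
  rewrite /B /symbar; have := sqr_ge0 m.
  by have := dlap_ge0 e k.1; have := dlap_ge0 e k.2; split; lra.
have -> : kfac e k * (T - B) =
    kfac1 e k.2 * (kfac1 e k.1 * (k.1 ^+ 2 - dlap e k.1)) +
    kfac1 e k.1 * (kfac1 e k.2 * (k.2 ^+ 2 - dlap e k.2)).
  by rewrite kfacE /T /B /symtil /symbar /nrm2; ring.
have -> : 5 / 4 * e ^+ 2 * (lorentz e k.1 * lorentz e k.2) * (T * B) =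
    5 / 4 * lorentz e k.2 * (e ^+ 2 / 2 * (T * B) * lorentz e k.1) +
    5 / 4 * lorentz e k.1 * (e ^+ 2 / 2 * (T * B) * lorentz e k.2).
  by field.
by rewrite lerD ?term_le.
Qed.

End Symbols.

Section Integrals.
Context {R : realType}.
Notation mu := (@lebesgue_measure R).
Implicit Types (c e m : R) (y k : R * R).

Definition yfac c t : R := (2 * (t ^+ 2 + c / 2))^-1.

Lemma yfac_ge0 c t : 0 <= c -> 0 <= yfac c t.
Proof. by move=> c_ge0; rewrite invr_ge0 mulr_ge0 // addr_ge0 ?sqr_ge0 ?divr_ge0. Qed.

Lemma measurable_yfac c : measurable_fun setT (yfac c).
Proof. rewrite /yfac; measurable_fun_tac. Qed.

Lemma integral_yfac c : 0 < c ->
  (\int[mu]_t (yfac c t)%:E = (pi / (2 * Num.sqrt (c / 2)))%:E)%E.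
Proof.
move=> c_gt0; rewrite /yfac; under eq_integral do rewrite invfM EFinM.
rewrite ge0_integralZl_EFin ?invr_ge0 //; last 2 first.
- by move=> t _; rewrite lee_fin invr_ge0 addr_ge0 ?sqr_ge0 ?divr_ge0 ?ltW.
- by apply/measurable_EFinP; measurable_fun_tac.
by rewrite integral_inv_sqr_add ?divr_gt0 // -EFinM mulrCA invfM mulrA.
Qed.

Lemma integral_yfac_lty c : 0 < c -> (\int[mu]_t (yfac c t)%:E < +oo)%E.
Proof. by move=> c_gt0; rewrite integral_yfac // ltry. Qed.

Lemma inv_sqr_nrm2_add_le c y : 0 < c -> ((nrm2 y + c) ^+ 2)^-1 <= yfac c y.1 * yfac c y.2.
Proof.
move=> c_gt0; rewrite (_ : nrm2 y + c = (y.1 ^+ 2 + c / 2) + (y.2 ^+ 2 + c / 2)).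
  by apply: inv_sqr_add_le; rewrite ltr_pwDr ?sqr_ge0 ?divr_gt0.
by rewrite /nrm2; field.
Qed.

Lemma integral_inv_sqr_nrm2_add_le c : 0 < c ->
  (\int[leb2 R]_y (((nrm2 y + c) ^+ 2)^-1)%:E <= (pi ^+ 2 / (2 * c))%:E)%E.
Proof.
move=> c_gt0; have yfac_c_ge0 t : 0 <= yfac c t by exact: yfac_ge0 (ltW c_gt0).
apply: (@le_trans _ _ (\int[leb2 R]_y (yfac c y.1 * yfac c y.2)%:E)%E).
  apply: ge0_le_integral => //.
  - by move=> y _; rewrite lee_fin invr_ge0 sqr_ge0.
  - by apply/measurable_EFinP; rewrite /nrm2; measurable_fun_tac.
  - by apply/measurable_EFinP; rewrite /yfac; measurable_fun_tac.
  - by move=> y _; rewrite lee_fin inv_sqr_nrm2_add_le.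
rewrite /leb2 integral_prod_mul;
  [|exact: measurable_yfac|exact: measurable_yfac|exact: yfac_c_ge0|exact: yfac_c_ge0].
(* Restated so as to match the sigma-finite instance of Lebesgue measure in the goal. *)
have -> : (\int[@lebesgue_measure R]_t (yfac c t)%:E = (pi / (2 * Num.sqrt (c / 2)))%:E)%E.
  exact: integral_yfac.
have c2_ge0 : 0 <= c / 2 by rewrite divr_ge0 ?ltW.
rewrite -EFinM lee_fin -expr2 exprMn exprVn exprMn sqr_sqrtr //.
by rewrite (_ : 2 ^+ 2 * (c / 2) = 2 * c) //; field.
Qed.

Definition kfac_dom m e (p : (R * R) * (R * R)) : R :=
  kfac e p.2 / (nrm2 p.1 + m ^+ 2) ^+ 2.

Lemma kfac_dom_ge0 m e p : 0 <= kfac_dom m e p.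
Proof. by rewrite divr_ge0 ?kfac_ge0 ?sqr_ge0. Qed.

Lemma kfac_dom_le m e p : m != 0 -> kfac_dom m e p <=
  25 / 16 * (yfac (m ^+ 2) p.1.1 * yfac (m ^+ 2) p.1.2 * (lorentz e p.2.1 * lorentz e p.2.2)).
Proof.
move=> m_neq0; have m2_gt0 : 0 < m ^+ 2 by rewrite exprn_even_gt0 ?m_neq0 ?orbT.
rewrite (_ : 25 / 16 * _ = (yfac (m ^+ 2) p.1.1 * yfac (m ^+ 2) p.1.2) *
  (5 / 4 * lorentz e p.2.1 * (5 / 4 * lorentz e p.2.2))); last by field.
rewrite /kfac_dom kfacE mulrC; apply: ler_pM.
- by rewrite invr_ge0 sqr_ge0.
- by rewrite mulr_ge0 ?kfac1_ge0.
- exact: inv_sqr_nrm2_add_le.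
- by apply: ler_pM; rewrite ?kfac1_ge0 ?kfac1_le_lorentz.
Qed.

Lemma integrable_kfac_dom m e : m != 0 -> 0 < e ->
  (leb4 R).-integrable setT (EFin \o kfac_dom m e).
Proof.
move=> m_neq0 e_gt0; have m2_gt0 : 0 < m ^+ 2 by rewrite exprn_even_gt0 ?m_neq0 ?orbT.
pose F y := yfac (m ^+ 2) y.1 * yfac (m ^+ 2) y.2.
pose G k := lorentz e k.1 * lorentz e k.2.
have yfac_m_ge0 t : 0 <= yfac (m ^+ 2) t by rewrite yfac_ge0 ?ltW.
have F_ge0 y : 0 <= F y by rewrite mulr_ge0.
have G_ge0 k : 0 <= G k by rewrite mulr_ge0 ?lorentz_ge0.
have mF : measurable_fun setT F by apply: measurable_prod_mul; exact: measurable_yfac.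
have mG : measurable_fun setT G by apply: measurable_prod_mul; exact: measurable_lorentz.
have F_fin : (\int[leb2 R]_y (F y)%:E < +oo)%E.
  by apply: integral_prod_mul_lty => //; first [exact: measurable_yfac | exact: integral_yfac_lty].
have G_fin : (\int[leb2 R]_k (G k)%:E < +oo)%E.
  apply: integral_prod_mul_lty => //;
    by first [exact: measurable_lorentz | exact: lorentz_ge0 | exact: integral_lorentz_lty].
have dom_int : (leb4 R).-integrable setT (fun p => (25 / 16)%:E * (F p.1 * G p.2)%:E)%E.
  apply: integrableZl => //; apply: ge0_integrable.
  - exact: measurable_prod_mul.
  - by move=> p; rewrite mulr_ge0.
  by apply: integral_prod_mul_lty.
apply: le_integrable dom_int => //.
  by apply/measurable_EFinP; rewrite /kfac_dom /kfac /nrm2; measurable_fun_tac.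
move=> p _; rewrite -EFinM !abse_EFin lee_fin (ger0_norm (kfac_dom_ge0 m e p)).
by rewrite ger0_norm ?kfac_dom_le // mulr_ge0 // mulr_ge0.
Qed.

End Integrals.

Section Gap.
Context {R : realType}.
Implicit Types (e m : R) (y k : R * R).

Definition gap_weight m e k : R :=
  kfac e k * (2 * (symtil m k - symbar m e k) / symtil m k).

Definition gap_dom m e (p : (R * R) * (R * R)) : R :=
  gap_weight m e p.2 * ((nrm2 p.1 + symbar m e p.2) ^+ 2)^-1.

Lemma symtil_gt0 m k : m != 0 -> 0 < symtil m k.
Proof. by move=> m_neq0; rewrite ltr_wpDl ?nrm2_ge0 // exprn_even_gt0 ?m_neq0 ?orbT. Qed.

Lemma symbar_gt0 m e k : m != 0 -> 0 < symbar m e k.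
Proof.
by move=> m_neq0; rewrite ltr_wpDl ?addr_ge0 ?dlap_ge0 // exprn_even_gt0 ?m_neq0 ?orbT.
Qed.

Lemma gap_weight_ge0 m e k : e != 0 -> 0 <= gap_weight m e k.
Proof.
move=> e_neq0; rewrite mulr_ge0 ?kfac_ge0 // divr_ge0 ?addr_ge0 ?nrm2_ge0 ?sqr_ge0 //.
by rewrite mulr_ge0 // subr_ge0 symbar_le_symtil.
Qed.

Lemma gap_dom_ge0 m e p : e != 0 -> 0 <= gap_dom m e p.
Proof. by move=> e_neq0; rewrite mulr_ge0 ?gap_weight_ge0 // invr_ge0 sqr_ge0. Qed.

Lemma measurable_gap_dom m e : measurable_fun setT (gap_dom m e).
Proof.
by rewrite /gap_dom /gap_weight /kfac /symtil /symbar /dlap /nrm2; measurable_fun_tac.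
Qed.

Lemma norm_kfac_div_sub_le m e (c : R) y k : e != 0 -> m != 0 -> `|c| <= 1 ->
  `|kfac e k * c / Dbar m e y k ^+ 2 - kfac e k * c / Dtil m y k ^+ 2| <= gap_dom m e (y, k).
Proof.
move=> e_neq0 m_neq0 c_le1; rewrite DbarE DtilE.
set B := nrm2 y + symbar m e k; set T := nrm2 y + symtil m k.
have B_gt0 : 0 < B by rewrite ltr_wpDl ?nrm2_ge0 ?symbar_gt0.
have BT : B <= T by rewrite lerD2l symbar_le_symtil.
have symtil_T : symtil m k <= T by rewrite lerDr nrm2_ge0.
have gap_le : (B ^+ 2)^-1 - (T ^+ 2)^-1 <= 2 * (T - B) / (symtil m k * B ^+ 2).
  by apply: inv_sqr_sub_inv_sqr_le; rewrite ?symtil_gt0.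
have gap_ge0 : 0 <= (B ^+ 2)^-1 - (T ^+ 2)^-1.
  by rewrite subr_ge0 lef_pV2 ?posrE ?exprn_gt0 ?(lt_le_trans B_gt0) //; nra.
rewrite -mulrBr normrM (ger0_norm gap_ge0) normrM (ger0_norm (kfac_ge0 e k)).
rewrite (_ : gap_dom m e (y, k) = kfac e k * (2 * (T - B) / (symtil m k * B ^+ 2))); last first.
  rewrite /gap_dom /gap_weight /= -/B (_ : T - B = symtil m k - symbar m e k).
    by field; rewrite !gt_eqF ?symtil_gt0.
  by rewrite /T /B; ring.
rewrite -mulrA ler_wpM2l ?kfac_ge0 // (le_trans _ gap_le) //.
by rewrite -[leRHS]mul1r ler_wpM2r.
Qed.

Lemma gap_weight_le m e k : e != 0 -> m != 0 ->
  gap_weight m e k * (pi ^+ 2 / (2 * symbar m e k)) <=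
  pi ^+ 2 * (5 / 4 * e ^+ 2) * (lorentz e k.1 * lorentz e k.2).
Proof.
move=> e_neq0 m_neq0.
have [T_gt0 B_gt0] := (symtil_gt0 m k m_neq0, symbar_gt0 m e k m_neq0).
rewrite (_ : _ * _ = pi ^+ 2 * (kfac e k * (symtil m k - symbar m e k) /
  (symtil m k * symbar m e k))); last by rewrite /gap_weight; field; rewrite !gt_eqF.
rewrite -[leRHS]mulrA ler_pM2l ?exprn_gt0 ?pi_gt0 // ler_pdivrMr ?mulr_gt0 //.
exact: kfac_gap_le.
Qed.

Lemma integral_gap_dom_section_le m e k : e != 0 -> m != 0 ->
  (\int[leb2 R]_y (gap_dom m e (y, k))%:E <=
   (pi ^+ 2 * (5 / 4 * e ^+ 2) * (lorentz e k.1 * lorentz e k.2))%:E)%E.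
Proof.
move=> e_neq0 m_neq0; rewrite /gap_dom /=; under eq_integral do rewrite EFinM.
rewrite ge0_integralZl_EFin ?gap_weight_ge0 //; last 2 first.
- by move=> y _; rewrite lee_fin invr_ge0 sqr_ge0.
- by apply/measurable_EFinP; rewrite /nrm2; measurable_fun_tac.
apply: le_trans.
  apply: lee_wpmul2l; first by rewrite lee_fin gap_weight_ge0.
  exact: integral_inv_sqr_nrm2_add_le (symbar_gt0 m e k m_neq0).
by rewrite -EFinM lee_fin gap_weight_le.
Qed.

Lemma integral_gap_dom_le m e : 0 < e -> m != 0 ->
  (\int[leb4 R]_p (gap_dom m e p)%:E <= (5 / 4 * pi ^+ 4)%:E)%E.
Proof.
move=> e_gt0 m_neq0; have e_neq0 : e != 0 by rewrite gt_eqF.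
pose L k := lorentz e k.1 * lorentz e k.2.
have mL : measurable_fun setT L by apply: measurable_prod_mul; exact: measurable_lorentz.
have mgap : measurable_fun setT (EFin \o gap_dom m e).
  by apply/measurable_EFinP; exact: measurable_gap_dom.
have gap_ge0 p : (0 <= (EFin \o gap_dom m e) p)%E by rewrite lee_fin gap_dom_ge0.
rewrite /leb4 fubini_tonelli2 //.
apply: (@le_trans _ _ (\int[leb2 R]_k (pi ^+ 2 * (5 / 4 * e ^+ 2) * L k)%:E)%E).
  apply: ge0_le_integral => //.
  - by move=> k _; apply: integral_ge0 => y _; exact: gap_ge0.
  - exact: measurable_fun_fubini_tonelli_G.
  - by apply/measurable_EFinP; apply: measurable_funM; first exact: measurable_cst.
  - by move=> k _; exact: integral_gap_dom_section_le.
under eq_integral do rewrite EFinM.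
rewrite ge0_integralZl_EFin //; last 3 first.
- by move=> k _; rewrite lee_fin mulr_ge0 ?lorentz_ge0.
- exact/measurable_EFinP.
- by rewrite mulr_ge0 ?sqr_ge0 // mulr_ge0 ?sqr_ge0.
rewrite /leb2 integral_prod_mul;
  [|exact: measurable_lorentz|exact: measurable_lorentz|exact: lorentz_ge0|exact: lorentz_ge0].
have -> : (\int[@lebesgue_measure R]_t (lorentz e t)%:E = (pi / e)%:E)%E.
  exact: integral_lorentz.
rewrite -!EFinM lee_fin (_ : pi ^+ 2 * (5 / 4 * e ^+ 2) * (pi / e * (pi / e)) = 5 / 4 * pi ^+ 4) //.
by field; rewrite gt_eqF.
Qed.

End Gap.

Section Difference.
Context {R : realType}.

Lemma cmod_le_sum_norm (w : R * R) : cmod w <= `|w.1| + `|w.2|.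
Proof.
rewrite /cmod -[leRHS]ger0_norm ?addr_ge0 // -sqrtr_sqr ler_sqrt ?sqr_ge0 //.
rewrite -[w.1 ^+ 2]real_normK ?num_real // -[w.2 ^+ 2]real_normK ?num_real //.
by rewrite sqrrD lerD2r lerDl mulrn_wge0 ?mulr_ge0.
Qed.

Lemma norm_Rintegral_kfac_sub_le m e (c : (R * R) * (R * R) -> R) :
  0 < e -> m != 0 -> measurable_fun setT c -> (forall p, `|c p| <= 1) ->
  `|Rintegral (leb4 R) setT (fun p => kfac e p.2 * c p / Dbar m e p.1 p.2 ^+ 2) -
    Rintegral (leb4 R) setT (fun p => kfac e p.2 * c p / Dtil m p.1 p.2 ^+ 2)|
  <= 5 / 4 * pi ^+ 4.
Proof.
move=> e_gt0 m_neq0 mc c_le1; have e_neq0 : e != 0 by rewrite gt_eqF.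
have m2_gt0 : 0 < m ^+ 2 by rewrite exprn_even_gt0 ?m_neq0 ?orbT.
set F := fun p => kfac e p.2 * c p / Dbar m e p.1 p.2 ^+ 2.
set G := fun p => kfac e p.2 * c p / Dtil m p.1 p.2 ^+ 2.
have mF : measurable_fun setT F.
  by rewrite /F /kfac /Dbar /nrm2; measurable_fun_tac.
have mG : measurable_fun setT G.
  by rewrite /G /kfac /Dtil /nrm2; measurable_fun_tac.
have dom_le (D : R) (p : (R * R) * (R * R)) : nrm2 p.1 + m ^+ 2 <= D ->
    `|kfac e p.2 * c p / D ^+ 2| <= kfac_dom m e p.
  by apply: norm_mul_inv_sqr_le; rewrite ?kfac_ge0 ?ltr_wpDl ?nrm2_ge0.
have iF : (leb4 R).-integrable setT (EFin \o F).
  apply: le_integrable_EFin (integrable_kfac_dom m e m_neq0 e_gt0) => // p.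
  by apply: dom_le; rewrite DbarE lerD2l /symbar lerDr addr_ge0 ?dlap_ge0.
have iG : (leb4 R).-integrable setT (EFin \o G).
  apply: le_integrable_EFin (integrable_kfac_dom m e m_neq0 e_gt0) => // p.
  by apply: dom_le; rewrite DtilE lerD2l /symtil lerDr nrm2_ge0.
have FG_le p : `|F p - G p| <= gap_dom m e p.
  by case: p => y k; exact: norm_kfac_div_sub_le.
have gap_fin := integral_gap_dom_le m e e_gt0 m_neq0.
have i_gap : (leb4 R).-integrable setT (EFin \o gap_dom m e).
  apply: ge0_integrable; first exact: measurable_gap_dom.
    by move=> p; exact: gap_dom_ge0.
  exact: le_lt_trans gap_fin (ltry _).
have iFG : (leb4 R).-integrable setT (EFin \o (F \- G)).
  by apply: le_integrable_EFin i_gap => //; exact: measurable_funB.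
rewrite -RintegralB //; apply: le_trans (le_normr_Rintegral _ iFG) _ => //.
apply: le_trans (le_Rintegral _ (integrable_norm iFG) i_gap (fun p _ => FG_le p)) _ => //.
rewrite /Rintegral -lee_fin fineK // ge0_fin_numE ?(le_lt_trans gap_fin) ?ltry //.
by apply: integral_ge0 => p _; rewrite lee_fin gap_dom_ge0.
Qed.

Lemma norm_scaled_Rintegral_kfac_sub_le m e (c : (R * R) * (R * R) -> R) :
  0 < e -> m != 0 -> measurable_fun setT c -> (forall p, `|c p| <= 1) ->
  `|(2 * pi) ^- 4 *
    (Rintegral (leb4 R) setT (fun p => kfac e p.2 * c p / Dbar m e p.1 p.2 ^+ 2) -
     Rintegral (leb4 R) setT (fun p => kfac e p.2 * c p / Dtil m p.1 p.2 ^+ 2))| <= 5 / 64.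
Proof.
move=> e_gt0 m_neq0 mc c_le1.
(* [field] would unfold [pi], so it is generalized first. *)
have -> : 5 / 64 = (2 * pi) ^- 4 * (5 / 4 * pi ^+ 4) :> R.
  by move: (@pi R) (lt0r_neq0 (@pi_gt0 R)) => P P_neq0; field.
rewrite normrM ger0_norm ?invr_ge0 ?exprn_ge0 ?mulr_ge0 ?pi_ge0 //.
by rewrite ler_wpM2l ?invr_ge0 ?exprn_ge0 ?mulr_ge0 ?pi_ge0 ?norm_Rintegral_kfac_sub_le.
Qed.

End Difference.

Theorem mainTheorem14 (R : realType) (m : R) (hm : 0 < m) :
  exists C2 : R, 0 < C2 /\
    forall (eps : R), 0 < eps -> eps <= 1 ->
    forall x z : R * R,
      cmod (Gbar m eps x z - Gtil m eps x z) <= C2.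
Proof.
(* The bound holds for every [eps > 0]. *)
exists (5 / 32); split => // eps eps_gt0 _ x z.
have m_neq0 : m != 0 by rewrite gt_eqF.
pose phase p := dot2 x p.1 + dot2 p.2 z.
have mphase : measurable_fun setT phase by rewrite /phase /dot2; measurable_fun_tac.
have Im_integrand D : (fun p => - (kfac eps p.2 * sin (phase p) / D p ^+ 2)) =
    (fun p => kfac eps p.2 * - sin (phase p) / D p ^+ 2).
  by apply/funext => p; rewrite mulrN mulNr.
apply: le_trans (cmod_le_sum_norm _) _; rewrite /Gbar /Gtil /Gint /= -!mulrBr.
rewrite (Im_integrand (fun p => Dbar m eps p.1 p.2)) (Im_integrand (fun p => Dtil m p.1 p.2)).
rewrite (_ : 5 / 32 = 5 / 64 + 5 / 64); last by field.
apply: lerD; apply: norm_scaled_Rintegral_kfac_sub_le => //.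
- exact: measurableT_comp measurable_cos mphase.
- by move=> p; exact: cos_max.
- by apply: measurable_funN; exact: measurableT_comp measurable_sin mphase.
- by move=> p; rewrite normrN sin_max.
Qed.
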